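(* Let $(G,M)$ be a transformation group, let $K\subset L\subset N$ be subsets of $M$, and let $\tau$ be an admissible topology on $\mathcal{E}^G_K(L,N)$. Suppose $H$ is a subgroup of $G_K(N)$ and the restriction map $r:G_K(N)\to\mathcal{E}^G_K(L,N)^\tau$, $r(g)=g|_L$, has a local section $s:\mathcal{U}\to H\subset G_K(N)$ at $i_L$. Then: (1) The restriction map $r|_H:H\to\mathcal{E}^H(L,N)^\tau$ is a principal bundle with structure group $H_L$. (2)(i) The topology $\tau$ coincides with the quotient topology induced by $r$. (ii) $\mathcal{E}^H(L,N)^\tau$ is open in $\mathcal{E}^G_K(L,N)^\tau$. (iii) If $H$ is a normal subgroup of $G_K(N)$, then (a) each orbit of $H$ is closed and open in $\mathcal{E}^G_K(L,N)^\tau$ (in particular $\mathcal{E}^H(L,N)^\tau$ is closed and open in $\mathcal{E}^G_K(L,N)^\tau$), and (b) if $H\subset G_K(N)_0$, then $\mathcal{E}^H(L,N)^\tau=\mathcal{E}^G_K(L,N)^\tau_0$.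
   Context: A transformation group $(G,M)$ consists of a locally compact, $\sigma$-compact Hausdorff space $M$ and a topological group $G$ acting continuously and effectively on $M$; each $g\in G$ is identified with a homeomorphism of $M$. For subsets $K,N\subset M$: $G_K=\{g\in G:g|_K=\mathrm{id}_K\}$, $G(N)=G_{M\setminus N}$, $G_K(N)=G_K\cap G(N)$; for a subgroup $H$, $H_0$ is the connected component of the identity and $H_L=\{h\in H:h|_L=\mathrm{id}_L\}$. For $K\subset L\subset N$, $\mathcal{E}^G_K(L,N)=\{g|_L:L\to M\mid g\in G_K(N)\}$; $G_K(N)$ acts on it by $g\cdot f=gf$ and $r$ is the orbit map at the inclusion $i_L:L\subset M$. A topology on $\mathcal{E}^G_K(L,N)$ is admissible if this action is continuous; $\mathcal{E}^G_K(L,N)^\tau$ denotes the set with topology $\tau$, and for a subset $\mathcal{F}$, $\mathcal{F}^\tau$ has the subspace topology and $\mathcal{F}^\tau_0$ is the connected component of $i_L$. For a subgroup $H\subset G_K(N)$, $\mathcal{E}^H(L,N)=\{h|_L:h\in H\}$. A local section of a map $f:X\to Y$ at $y$ is a map $s:U\to X$ on a neighborhood $U$ of $y$ with $fs=$ the inclusion of $U$. *)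

From HB Require Import structures.
From mathcomp Require Import all_boot all_order all_algebra.
From mathcomp Require Import all_classical all_reals all_analysis.
Set Implicit Arguments. Unset Strict Implicit. Unset Printing Implicit Defensive.
Local Open Scope classical_set_scope.

Definition sigma_compact (M : topologicalType) : Prop :=
  exists Kn : nat -> set M, (forall n, compact (Kn n)) /\ \bigcup_n Kn n = setT.

(** A transformation group (G,M): M locally compact, sigma-compact, Hausdorff;
    G a topological group (multiplication [mul], inverse [inv], unit [one],
    with continuous [mul] and [inv]) acting continuously ([act]) and
    effectively ([act] injective, so g is identified with [act g]) on M. *)
Definition transformation_group (G M : topologicalType)
  (mul : G -> G -> G) (inv : G -> G) (one : G) (act : G -> M -> M) : Prop :=
  [/\ hausdorff_space M, locally_compact [set: M] & sigma_compact M] /\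
  (forall g h x, act (mul g h) x = act g (act h x)) /\
  (forall x, act one x = x) /\
  (forall g x, act (inv g) (act g x) = x /\ act g (act (inv g) x) = x) /\
  injective act /\
  continuous (fun p : G * G => mul p.1 p.2) /\
  continuous inv /\
  continuous (fun p : G * M => act p.1 p.2).

Definition fixes (G M : Type) (act : G -> M -> M) (g : G) (A : set M) : Prop :=
  forall x, A x -> act g x = x.

Definition GKN (G M : Type) (act : G -> M -> M) (K N : set M) : set G :=
  [set g | fixes act g K /\ fixes act g (~` N)].

Definition stab (G M : Type) (act : G -> M -> M) (H : set G) (L : set M) : set G :=
  [set h | H h /\ fixes act h L].

Definition restr (G M : Type) (act : G -> M -> M) (L : set M) (g : G)
  : {x : M | L x} -> M := fun x => act g (proj1_sig x).
Arguments restr {G M} act L g _.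

Definition rel_open (T : topologicalType) (A B : set T) : Prop :=
  exists O, open O /\ A `&` B = A `&` O.

Definition subgroup (G : Type) (mul : G -> G -> G) (inv : G -> G) (one : G)
  (H : set G) : Prop :=
  H one /\ (forall g h, H g -> H h -> H (mul g h)) /\ (forall g, H g -> H (inv g)).

Definition normal_in (G : Type) (mul : G -> G -> G) (inv : G -> G)
  (H S : set G) : Prop :=
  forall g h, S g -> H h -> H (mul (mul g h) (inv g)).

(** p : P -> B is a principal bundle with structure group S (a subgroup of X
    acting on P by right multiplication; all subsets carry subspace
    topologies): p maps P onto B, P is S-stable, and p is locally trivial:
    over an open W of B there is an S-equivariant homeomorphism
    phi : p^{-1}(W) ∩ P -> W × S over W, with inverse psi. *)
Definition principal_bundle (X Y : topologicalType) (mul : X -> X -> X)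
  (P : set X) (B : set Y) (p : X -> Y) (S : set X) : Prop :=
  p @` P = B /\
  (forall x h, P x -> S h -> P (mul x h)) /\
  forall b, B b -> exists (W : set Y) (phi : X -> Y * X) (psi : Y * X -> X),
    W b /\ W `<=` B /\ rel_open B W /\
    (forall x, P x -> W (p x) -> (phi x).1 = p x /\ S (phi x).2) /\
    (forall y h, W y -> S h -> P (psi (y, h)) /\ W (p (psi (y, h))) /\
                                 phi (psi (y, h)) = (y, h)) /\
    (forall x, P x -> W (p x) -> psi (phi x) = x) /\
    {within P `&` p @^-1` W, continuous phi} /\
    {within W `*` S, continuous psi} /\
    (forall x h, P x -> W (p x) -> S h ->
       phi (mul x h) = ((phi x).1, mul (phi x).2 h)).

From HB Require Import structures.
From mathcomp Require Import all_boot all_order all_algebra.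
From mathcomp Require Import all_classical all_reals all_analysis.
Set Implicit Arguments. Unset Strict Implicit. Unset Printing Implicit Defensive.
Local Open Scope classical_set_scope.

(* Translating the local section s at i_L by k in H gives a local section
   e |-> k s(k^-1 e) of r around r(k), with values in H.  These translated
   sections show at once that r(H) is open, that a set whose preimage is open
   in G_K(N) is itself open (so tau is the quotient topology), and they give
   the bundle charts x |-> (r x, s_k(r x)^-1 x) with values in H_L.  When H
   is normal in G_K(N), translating by g in G_K(N) maps H-orbits onto
   H-orbits, so every orbit is a translate of the open set r(H); the
   complement of an orbit is a union of orbits, so orbits are clopen, and a
   clopen set contains the connected component of each of its points. *)

Lemma nbhs_pairl (X Y : topologicalType) (a : X) (b : Y) (Q : set (X * Y)) :
  nbhs (a, b) Q -> nbhs a (fun x => Q (x, b)).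
Proof. by apply: (cvg_pair cvg_id (cvg_cst b)). Qed.

Lemma nbhs_pairr (X Y : topologicalType) (a : X) (b : Y) (Q : set (X * Y)) :
  nbhs (a, b) Q -> nbhs b (fun y => Q (a, y)).
Proof. by apply: (cvg_pair (cvg_cst a) cvg_id). Qed.

Lemma continuous_partial_app (X Y Z : topologicalType) (f : X -> Y -> Z) :
  continuous (fun p : X * Y => f p.1 p.2) -> forall a, continuous (f a).
Proof. by move=> fc a y V /(fc (a, y)) /nbhs_pairr. Qed.

Lemma connected_component_sub_clopen (T : topologicalType) (C : set T) x :
  clopen C -> C x -> connected_component [set: T] x `<=` C.
Proof.
move=> [oC cC] Cx; set X := connected_component _ x.
have Xx : X x by exact: connected_component_refl.
have <- : X `&` C = X.
  apply: component_connected; first by exists x.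
  - by exists C.
  - by exists C.
by move=> y [].
Qed.

Section Subgroup.
Variables (G : Type) (mul : G -> G -> G) (inv : G -> G) (one : G) (S : set G).
Hypothesis subS : subgroup mul inv one S.

Lemma subgroup1 : S one. Proof. by case: subS. Qed.
Lemma subgroupM g h : S g -> S h -> S (mul g h).
Proof. by case: subS => _ [+ _]; apply. Qed.
Lemma subgroupV g : S g -> S (inv g). Proof. by case: subS => _ [_]; apply. Qed.

End Subgroup.

(* No group axioms are assumed for [mul], [inv], [one]: they are forced by
   the effectiveness of the action. *)
Section EffectiveAction.
Variables (G M : Type) (mul : G -> G -> G) (inv : G -> G) (one : G)
  (act : G -> M -> M).
Hypotheses (actM : forall g h x, act (mul g h) x = act g (act h x))
  (act1 : forall x, act one x = x)
  (actVK : forall g x, act (inv g) (act g x) = x)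
  (actKV : forall g x, act g (act (inv g) x) = x)
  (act_inj : injective act).

Lemma effective_eq a b : act a =1 act b -> a = b.
Proof. by move=> h; apply/act_inj/funext. Qed.

Lemma effective_mulA a b c : mul (mul a b) c = mul a (mul b c).
Proof. by apply: effective_eq => x; rewrite !actM. Qed.
Lemma effective_mul1g a : mul one a = a.
Proof. by apply: effective_eq => x; rewrite actM act1. Qed.
Lemma effective_mulg1 a : mul a one = a.
Proof. by apply: effective_eq => x; rewrite actM act1. Qed.
Lemma effective_mulVg a : mul (inv a) a = one.
Proof. by apply: effective_eq => x; rewrite actM actVK act1. Qed.
Lemma effective_mulgV a : mul a (inv a) = one.
Proof. by apply: effective_eq => x; rewrite actM actKV act1. Qed.
Lemma effective_invK a : inv (inv a) = a.
Proof. by apply: effective_eq => x; rewrite -{1}[x](actVK a) actVK. Qed.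

Lemma fixesM g h A : fixes act g A -> fixes act h A -> fixes act (mul g h) A.
Proof. by move=> fg fh x Ax; rewrite actM fh // fg. Qed.
Lemma fixesV g A : fixes act g A -> fixes act (inv g) A.
Proof. by move=> fg x Ax; rewrite -{1}(fg x Ax) actVK. Qed.

Lemma GKN_subgroup K N : subgroup mul inv one (GKN act K N).
Proof.
split; first by split=> x _; rewrite act1.
by split=> [g h [? ?] [? ?]|g [? ?]]; split; by [apply: fixesM | apply: fixesV].
Qed.

End EffectiveAction.

Section RestrictionMap.
Variables (G M : topologicalType) (mul : G -> G -> G) (inv : G -> G) (one : G)
  (act : G -> M -> M).
Hypothesis hTG : transformation_group mul inv one act.

Let actM g h x : act (mul g h) x = act g (act h x). Proof. by case: hTG => _ []. Qed.
Let act1 x : act one x = x. Proof. by case: hTG => _ [_ []]. Qed.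
Let actVK g x : act (inv g) (act g x) = x.
Proof. by case: hTG => _ [_ [_ [/(_ g x) []]]]. Qed.
Let actKV g x : act g (act (inv g) x) = x.
Proof. by case: hTG => _ [_ [_ [/(_ g x) []]]]. Qed.
Let act_inj : injective act. Proof. by case: hTG => _ [_ [_ [_ []]]]. Qed.
Let mul_cont : continuous (fun p : G * G => mul p.1 p.2).
Proof. by case: hTG => _ [_ [_ [_ [_ []]]]]. Qed.
Let inv_cont : continuous inv. Proof. by case: hTG => _ [_ [_ [_ [_ [_ []]]]]]. Qed.

Let mulA := effective_mulA actM act_inj.
Let mul1g := effective_mul1g actM act1 act_inj.
Let mulg1 := effective_mulg1 actM act1 act_inj.
Let mulVg := effective_mulVg actM act1 actVK act_inj.
Let mulgV := effective_mulgV actM act1 actKV act_inj.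
Let invK := effective_invK actVK act_inj.

Variables (K L N : set M) (ET : topologicalType) (emb : ET -> ({x : M | L x} -> M)).
Hypotheses (emb_inj : injective emb)
  (emb_range : range emb = [set f | exists g, GKN act K N g /\ f = restr act L g]).
Variables (r : G -> ET) (actE : G -> ET -> ET).
Hypotheses (hr : forall g, GKN act K N g -> emb (r g) = restr act L g)
  (hactE : forall g e, GKN act K N g -> emb (actE g e) = act g \o emb e)
  (admissible : {within GKN act K N `*` [set: ET],
                  continuous (fun p : G * ET => actE p.1 p.2)}).

Local Notation GK := (GKN act K N).
Let GK_sub := GKN_subgroup actM act1 actVK K N.
Let GK1 := subgroup1 GK_sub.
Let GKM := subgroupM GK_sub.
Let GKV := subgroupV GK_sub.

Lemma actEM a b e : GK a -> GK b -> actE (mul a b) e = actE a (actE b e).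
Proof.
move=> Ga Gb; have Gab := GKM Ga Gb; apply: emb_inj; rewrite !hactE //.
by apply: funext => y /=; rewrite actM.
Qed.

Lemma actE1 e : actE one e = e.
Proof. by apply: emb_inj; rewrite hactE //; apply: funext => y /=. Qed.

Lemma restrM a b : GK a -> GK b -> r (mul a b) = actE a (r b).
Proof.
move=> Ga Gb; have Gab := GKM Ga Gb; apply: emb_inj; rewrite hactE // !hr //.
by apply: funext => -[x Lx]; rewrite /restr /= actM.
Qed.

Lemma restr_actE g : GK g -> r g = actE g (r one).
Proof. by move=> Gg; rewrite -restrM ?mulg1. Qed.

Lemma restr_surj e : exists2 g, GK g & e = r g.
Proof.
have : range emb (emb e) by exists e.
by rewrite emb_range => -[g [Gg he]]; exists g => //; apply: emb_inj; rewrite hr.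
Qed.

Lemma restr_eq_fixes a b :
  GK a -> GK b -> r a = r b -> fixes act (mul (inv b) a) L.
Proof.
move=> Ga Gb /(congr1 emb); rewrite !hr // => eab x Lx.
have := congr1 (fun f => f (exist _ x Lx)) eab; rewrite /restr /= => eabx.
by rewrite actM eabx actVK.
Qed.

Lemma restrM_fixes a h : GK a -> GK h -> fixes act h L -> r (mul a h) = r a.
Proof.
move=> Ga Gh fh; have Gah := GKM Ga Gh; apply: emb_inj; rewrite !hr //.
by apply: funext => -[x Lx]; rewrite /restr /= actM fh.
Qed.

Lemma nbhs_actE c e V : GK c -> nbhs (actE c e) V ->
  nbhs (c, e) (fun p => GK p.1 -> V (actE p.1 p.2)).
Proof.
move=> Gc /((subspace_continuousP _ _).1 admissible (c, e) (conj Gc I)) hV.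
have : nbhs (c, e) (fun p => (GK `*` [set: ET]) p -> V (actE p.1 p.2)) := hV.
by apply: filterS => p hp Gp; apply: hp.
Qed.

Lemma actE_continuous c : GK c -> continuous (actE c).
Proof.
by move=> Gc e V /(nbhs_actE Gc) /nbhs_pairr; apply: filterS => e' /=; apply.
Qed.

Lemma restr_cvg g V : GK g -> nbhs (r g) V -> nbhs g (fun g' => GK g' -> V (r g')).
Proof.
move=> Gg; rewrite restr_actE // => /(nbhs_actE Gg) /nbhs_pairl.
by apply: filterS => g' /= h Gg'; rewrite restr_actE //; apply: h.
Qed.

Lemma restr_continuous : {within GK, continuous r}.
Proof. by apply/subspace_continuousP => g Gg V; apply: restr_cvg. Qed.

Lemma rel_open_restr_preimage V : open V -> rel_open GK (r @^-1` V).
Proof.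
move=> oV; have : open (r @^-1` V : set (subspace GK)).
  by apply: open_comp => // x _; apply: restr_continuous.
case/open_subspaceP => O oO hO; exists O; split => //.
by rewrite setIC -hO setIC.
Qed.

Section LocalSection.
Variables (H : set G) (U : set ET) (s : ET -> G).
Hypotheses (subH : subgroup mul inv one H) (HGK : H `<=` GK)
  (hU : nbhs (r one) U) (sH : forall u, U u -> H (s u))
  (s_cont : {within U, continuous s}) (rs : forall u, U u -> r (s u) = u).

Definition section_dom k := interior (actE (inv k) @^-1` U).
Definition translated_section k e := mul k (s (actE (inv k) e)).
Local Notation D := section_dom.
Local Notation sec := translated_section.

Lemma section_domU k e : D k e -> U (actE (inv k) e).
Proof. exact: interior_subset. Qed.

Lemma section_dom_restr k : GK k -> D k (r k).
Proof.
move=> Gk; have Gk' := GKV Gk.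
by apply: (actE_continuous Gk'); rewrite -restrM ?mulVg.
Qed.

Lemma nbhs_section_dom k : GK k -> nbhs (r k) (D k).
Proof.
move=> Gk; apply: open_nbhs_nbhs.
by split; [exact: open_interior | exact: section_dom_restr].
Qed.

Lemma translated_sectionH k e : H k -> D k e -> H (sec k e).
Proof. by move=> Hk /section_domU Ue; apply: (subgroupM subH) => //; apply: sH. Qed.

Lemma translated_sectionGK k e : GK k -> D k e -> GK (sec k e).
Proof. by move=> Gk /section_domU Ue; apply: GKM => //; apply/HGK/sH. Qed.

Lemma restr_translated_section k e : GK k -> D k e -> r (sec k e) = e.
Proof.
move=> Gk /section_domU Ue; have Gk' := GKV Gk.
by rewrite restrM ?rs -?actEM ?mulgV ?actE1 //; apply/HGK/sH.
Qed.

Lemma translated_section_cvg k e : GK k -> D k e -> sec k @ e --> sec k e.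
Proof.
move=> Gk De; have Gk' := GKV Gk.
have s_cvg : (fun e' => s (actE (inv k) e')) @ e --> s (actE (inv k) e).
  move=> P /((subspace_continuousP _ _).1 s_cont _ (section_domU De)) sP.
  have /(actE_continuous Gk') {}sP :
    nbhs (actE (inv k) e) (fun y => U y -> P (s y)) := sP.
  have {}sP :
    nbhs e (fun e' => U (actE (inv k) e') -> P (s (actE (inv k) e'))) := sP.
  have De' : nbhs e (actE (inv k) @^-1` U) := De.
  by apply: filterS2 sP De' => e'; apply.
have mulk_cont := continuous_partial_app mul_cont (a := k).
exact: (cvg_comp _ _ s_cvg (mulk_cont _)).
Qed.

Lemma open_restr_image : open (r @` H).
Proof.
rewrite openE => _ [h Hh <-]; have Gh := HGK Hh.
apply: filterS (nbhs_section_dom Gh) => e De.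
by exists (sec h e); [exact: translated_sectionH | exact: restr_translated_section].
Qed.

Lemma open_of_rel_open_restr_preimage V : rel_open GK (r @^-1` V) -> open V.
Proof.
case=> O [oO hO].
have VO x : GK x -> V (r x) <-> O x.
  move=> Gx; split=> [Vx | Ox].
  - by have [] : (GK `&` O) x by rewrite -hO.
  - by have [] : (GK `&` r @^-1` V) x by rewrite hO.
rewrite openE => e; have [g Gg ->] := restr_surj e => Vg.
have Dg := section_dom_restr Gg.
have Og : O (sec g (r g)).
  by apply/(VO _ (translated_sectionGK Gg Dg)); rewrite restr_translated_section.
have secO : nbhs (r g) (sec g @^-1` O).
  exact: translated_section_cvg Gg Dg _ (open_nbhs_nbhs (conj oO Og)).
apply: filterS2 secO (nbhs_section_dom Gg) => e' Oe' De'.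
rewrite -(restr_translated_section Gg De').
by apply/VO => //; exact: translated_sectionGK.
Qed.

Definition H_orbit e := [set actE h e | h in H].

Lemma H_orbit_refl e : H_orbit e e.
Proof. by exists one; [exact: subgroup1 subH | exact: actE1]. Qed.

Lemma restr_image_H_orbit : r @` H = H_orbit (r one).
Proof.
by apply/seteqP; split=> _ [h Hh <-]; exists h; rewrite // (restr_actE (HGK Hh)).
Qed.

Section NormalSubgroup.
Hypothesis nH : normal_in mul inv H GK.

Lemma H_orbit_restr g : GK g -> H_orbit (r g) = actE (inv g) @^-1` (r @` H).
Proof.
move=> Gg; have Gg' := GKV Gg; apply/seteqP; split=> e.
  case=> h Hh <- /=; have Gh := HGK Hh.
  exists (mul (mul (inv g) h) g); first by have := nH Gg' Hh; rewrite invK.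
  by have Gg'h := GKM Gg' Gh; rewrite restrM ?actEM.
case=> h Hh /= hg; have Gh := HGK Hh.
exists (mul (mul g h) (inv g)); first exact: nH.
have Gghg := GKM (GKM Gg Gh) Gg'.
by rewrite -restrM // mulA mulVg mulg1 restrM // hg -actEM // mulgV actE1.
Qed.

Lemma open_H_orbit e : open (H_orbit e).
Proof.
have [g Gg ->] := restr_surj e; rewrite H_orbit_restr //.
by apply: open_comp open_restr_image => x _; exact: actE_continuous (GKV Gg) x.
Qed.

Lemma closed_H_orbit e : closed (H_orbit e).
Proof.
rewrite -openC openE => e' notOe'.
apply: filterS (open_nbhs_nbhs (conj (open_H_orbit e') (H_orbit_refl e'))).
move=> _ [h1 Hh1 <-] [h2 Hh2 h2e]; apply: notOe'.
have [G1 G2] := (HGK Hh1, HGK Hh2); have G1' := GKV G1.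
exists (mul (inv h1) h2); first by apply: (subgroupM subH) => //; exact: (subgroupV subH).
by rewrite actEM // h2e -actEM // mulVg actE1.
Qed.

Lemma restr_image_component :
  H `<=` connected_component GK one -> r @` H = connected_component [set: ET] (r one).
Proof.
move=> H_GK0; apply/seteqP; split=> [_ [h Hh <-] | ].
  have [C [C1 CG cC] Ch] := H_GK0 h Hh.
  exists (r @` C); last by exists h.
  split; [by exists one | by [] |].
  exact: connected_continuous_connected cC (continuous_subspaceW CG restr_continuous).
apply: connected_component_sub_clopen; last by exists one; first exact: subgroup1 subH.
by rewrite restr_image_H_orbit; split; [exact: open_H_orbit | exact: closed_H_orbit].
Qed.

End NormalSubgroup.

Definition bundle_chart k x := (r x, mul (inv (sec k (r x))) x).
Definition bundle_chart_inv k (p : ET * G) := mul (sec k p.1) p.2.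

Lemma bundle_chart_continuous k : GK k ->
  {within H `&` r @^-1` D k, continuous bundle_chart k}.
Proof.
move=> Gk; apply/subspace_continuousP => x [Hx Dx]; have Gx := HGK Hx.
have r_cvg : r @ within (H `&` r @^-1` D k) (nbhs x) --> r x.
  move=> V /(restr_cvg Gx); apply: filterS => g Vg [Hg _].
  exact/Vg/HGK.
apply: cvg_pair => //; apply: continuous2_cvg.
- exact: (@mul_cont (_, _)).
- exact: cvg_comp (cvg_comp _ _ r_cvg (translated_section_cvg Gk Dx)) (@inv_cont _).
- exact: cvg_within.
Qed.

Lemma bundle_chart_inv_continuous k : GK k ->
  {within D k `*` stab act H L, continuous bundle_chart_inv k}.
Proof.
move=> Gk; apply/subspace_continuousP => -[e h] [De _].
rewrite /bundle_chart_inv; apply: cvg_within_filter; apply: continuous2_cvg.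
- exact: (@mul_cont (_, _)).
- exact: cvg_comp cvg_fst (translated_section_cvg Gk De).
- exact: cvg_snd.
Qed.

Lemma restr_principal_bundle : principal_bundle mul H (r @` H) r (stab act H L).
Proof.
split=> //; split=> [x h Hx [Hh _] | _ [k Hk <-]]; first exact: (subgroupM subH).
have Gk := HGK Hk; exists (D k), (bundle_chart k), (bundle_chart_inv k).
have secH e : D k e -> H (sec k e) by exact: translated_sectionH.
have rsec e : D k e -> r (sec k e) = e by exact: restr_translated_section.
have HM := subgroupM subH; have HV := subgroupV subH.
split; first exact: section_dom_restr.
split; first by move=> e De; exists (sec k e); [exact: secH | exact: rsec].
split; first by exists (D k); split => //; exact: open_interior.
split.
  move=> x Hx Dx; split=> //; split; first by apply: HM => //; apply/HV/secH.
  have Gs := HGK (secH _ Dx).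
  by apply: restr_eq_fixes; rewrite ?rsec //; exact: HGK.
split.
  move=> e h De [Hh fh]; have [Gs Gh] := (HGK (secH e De), HGK Hh).
  have rpsi : r (bundle_chart_inv k (e, h)) = e by rewrite /= restrM_fixes ?rsec.
  split; first exact: HM (secH e De) Hh.
  by rewrite rpsi /bundle_chart rpsi -mulA mulVg mul1g.
split; first by move=> x Hx Dx; rewrite /bundle_chart_inv /= -mulA mulgV mul1g.
split; first exact: bundle_chart_continuous.
split; first exact: bundle_chart_inv_continuous.
move=> x h Hx Dx [Hh fh]; have [Gx Gh] := (HGK Hx, HGK Hh).
by rewrite /bundle_chart restrM_fixes // mulA.
Qed.

End LocalSection.
End RestrictionMap.

Theorem lemma3p1
  (G M : topologicalType) (mul : G -> G -> G) (inv : G -> G) (one : G)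
  (act : G -> M -> M)
  (hTG : transformation_group mul inv one act)
  (K L N : set M) (hKL : K `<=` L) (hLN : L `<=` N)
  (ET : topologicalType) (emb : ET -> ({x : M | L x} -> M))
  (emb_inj : injective emb)
  (emb_range : range emb = [set f | exists g, GKN act K N g /\ f = restr act L g])
  (r : G -> ET) (hr : forall g, GKN act K N g -> emb (r g) = restr act L g)
  (actE : G -> ET -> ET)
  (hactE : forall g e, GKN act K N g -> emb (actE g e) = act g \o emb e)
  (admissible : {within GKN act K N `*` [set: ET],
                  continuous (fun p : G * ET => actE p.1 p.2)})
  (H : set G) (hHsub : subgroup mul inv one H) (hHGKN : H `<=` GKN act K N)
  (U : set ET) (s : ET -> G)
  (hU : nbhs (r one) U)
  (hsH : forall u, U u -> H (s u))
  (hs_cont : {within U, continuous s})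
  (hrs : forall u, U u -> r (s u) = u) :
  (* (1) *)
  principal_bundle mul H (r @` H) r (stab act H L) /\
  (* (2)(i) tau is the quotient topology of r : G_K(N) -> E *)
  (forall V : set ET, open V <-> rel_open (GKN act K N) (r @^-1` V)) /\
  (* (2)(ii) *)
  open (r @` H) /\
  (* (2)(iii) *)
  (normal_in mul inv H (GKN act K N) ->
     (forall e : ET, open [set actE h e | h in H] /\ closed [set actE h e | h in H]) /\
     (open (r @` H) /\ closed (r @` H)) /\
     (H `<=` connected_component (GKN act K N) one ->
        r @` H = connected_component [set: ET] (r one))).
Proof.
split; first by eapply restr_principal_bundle; eassumption.
split.
  move=> V; split; first by eapply rel_open_restr_preimage; eassumption.
  by eapply open_of_rel_open_restr_preimage; eassumption.
split; first by eapply open_restr_image; eassumption.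
move=> nH.
have clopen_orbit e : open (H_orbit actE H e) /\ closed (H_orbit actE H e).
  by split; [eapply open_H_orbit | eapply closed_H_orbit]; eassumption.
split=> //; split; first by rewrite (restr_image_H_orbit hTG emb_inj hr hactE hHGKN).
by eapply restr_image_component; eassumption.
Qed.
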